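(* Let $m\in\mathbb{N}^+$. There exist $C=C_N(m)>0$ and $\delta=\delta(m)>0$ such that $$\big|(u^{(m)}_p)'(r)\big|\leq\frac{C}{r^{\frac{p+1}{p-1}}}\qquad\text{for all }r\in(0,1)\text{ and all }p\in[p_S-\delta,p_S).$$
   Context: Standing setting: $N\geq3$, $B$ unit ball of $\mathbb{R}^N$ centered at $0$, $p_S=\frac{N+2}{N-2}$. $u^{(m)}_p$ is the unique radial solution of $-\Delta u=|u|^{p-1}u$ in $B$, $u=0$ on $\partial B$, with exactly $m$ nodal regions and $u^{(m)}_p(0)>0$, written as a function of $r=|x|$. *)

From Stdlib Require Import Reals List Sorted.
Open Scope R_scope.

Definition pS (N : nat) : R := (INR N + 2) / (INR N - 2).

(* The nonlinearity |u|^{p-1} u  (note Rpower 0 _ * 0 = 0). *)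
Definition fpow (p s : R) : R := Rpower (Rabs s) (p - 1) * s.

(* u : [0,1] -> R (as a function of r = |x|) is a classical radial solution of
   -Δu = |u|^{p-1}u in the unit ball of R^N with u = 0 on the boundary:
   u is C^1 on [0,1) with u'(0)=0, twice differentiable on (0,1) with
   u'' + (N-1)/r u' + |u|^{p-1}u = 0, and u(r) -> 0 = u(1) as r -> 1^-. *)
Definition radial_solution (N : nat) (p : R) (u : R -> R) : Prop :=
  exists u1 u2 : R -> R,
    (forall r, 0 <= r < 1 -> derivable_pt_lim u r (u1 r)) /\
    (forall r, 0 <= r < 1 -> continuity_pt u1 r) /\
    u1 0 = 0 /\
    (forall r, 0 < r < 1 -> derivable_pt_lim u1 r (u2 r)) /\
    (forall r, 0 < r < 1 ->
        u2 r + (INR N - 1) / r * u1 r + fpow p (u r) = 0) /\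
    u 1 = 0 /\
    (forall eps, 0 < eps -> exists d, 0 < d /\
        forall r, 1 - d < r < 1 -> Rabs (u r) < eps).

(* u has exactly m nodal regions: its zero set in (0,1) consists of exactly
   m-1 points 0 < r_1 < ... < r_{m-1} < 1 (the nodal regions are then the
   ball {|x|<r_1} and the annuli between consecutive zeros / the boundary). *)
Definition has_m_nodal_regions (m : nat) (u : R -> R) : Prop :=
  exists zs : list R,
    length zs = (m - 1)%nat /\
    StronglySorted Rlt zs /\
    (forall z, In z zs -> 0 < z < 1) /\
    (forall r, 0 < r < 1 -> (u r = 0 <-> In r zs)).

Definition is_u_m_p (N : nat) (p : R) (m : nat) (u : R -> R) : Prop :=
  radial_solution N p u /\ has_m_nodal_regions m u /\ 0 < u 0.

(* Emden-Fowler variables: with k = 2/(p-1) and t = ln r, the functions v = r^k u and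
   y = dv/dt satisfy v' = y, y' = A y + b v - |v|^(p-1) v, where A = 2k - (N-2) >= 0 is of
   order p_S - p and b = k (N-2-k) > 0.  The energy H = y^2/2 - b v^2/2 + |v|^(p+1)/(p+1)
   is therefore nondecreasing (dH/dt = A y^2), and H(0+) = 0.  On a nodal interval v has a
   fixed sign and y changes sign at most once, which bounds the increase of H there by
   4 A sup|y| sup|v|.  Summing over the m nodal intervals and absorbing, for A small, gives a
   bound on H, hence on v and y, uniform in p; finally r^((p+1)/(p-1)) |u'| = |y - k v|. *)

From Stdlib Require Import Reals Lra Lia List Classical Wf_nat.
Open Scope R_scope.

Lemma continuity_pt_ball f x : continuity_pt f x -> forall eps, 0 < eps ->
  exists alp, 0 < alp /\ forall z, Rabs (z - x) < alp -> Rabs (f z - f x) < eps.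
Proof.
  intros Hf eps Heps. destruct (Hf eps Heps) as [alp [Halp Hz]].
  exists alp; split; [lra|]. intros z Hzx.
  destruct (Req_dec z x) as [->|Hne].
  - rewrite Rminus_diag, Rabs_R0; lra.
  - apply (Hz z). repeat split; auto.
Qed.

Lemma continuity_pt_bounded_near f x : continuity_pt f x ->
  exists a, 0 < a /\ forall z, Rabs (z - x) < a -> Rabs (f z) <= Rabs (f x) + 1.
Proof.
  intro Hf. destruct (continuity_pt_ball f x Hf 1 ltac:(lra)) as [a [Ha Hz]].
  exists a. split; [auto|]. intros z Hzx. specialize (Hz z Hzx).
  pose proof (Rabs_triang_inv (f z) (f x)). lra.
Qed.

Lemma derivable_pt_lim_continuity_pt f x l :
  derivable_pt_lim f x l -> continuity_pt f x.
Proof. intro H. apply derivable_continuous_pt. exists l. exact H. Qed.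

Lemma Rpower_pos x y : 0 < Rpower x y.
Proof. apply exp_pos. Qed.

Lemma Rpower_le_1 x y : 0 < x <= 1 -> 0 <= y -> Rpower x y <= 1.
Proof.
  intros Hx Hy.
  replace 1 with (Rpower 1 y) by (unfold Rpower; now rewrite ln_1, Rmult_0_r, exp_0).
  apply Rle_Rpower_l; lra.
Qed.

Lemma Rpower_plus_1 r k : 0 < r -> Rpower r (k + 1) = Rpower r k * r.
Proof. intro Hr. rewrite Rpower_plus, Rpower_1; auto. Qed.

Lemma Rpower_minus_1 r k : 0 < r -> Rpower r (k - 1) = Rpower r k / r.
Proof.
  intro Hr. replace k with ((k - 1) + 1) at 2 by ring.
  rewrite Rpower_plus_1 by auto. field. lra.
Qed.

Lemma Rdiv_nonneg_pos a b : 0 <= a -> 0 < b -> 0 <= a / b.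
Proof. intros Ha Hb. apply Rmult_le_pos; [auto|apply Rlt_le, Rinv_0_lt_compat, Hb]. Qed.

Lemma Rabs_le_sqrt x Y : x ^ 2 <= Y -> Rabs x <= sqrt Y.
Proof.
  intro H. rewrite <- sqrt_Rsqr_abs. apply sqrt_le_1_alt. rewrite Rsqr_pow2. auto.
Qed.

Lemma sign_mult_sq s x : (s = 1 \/ s = -1) -> (s * x) ^ 2 = x ^ 2.
Proof. intros [-> | ->]; ring. Qed.

Lemma sign_mult_abs s x : (s = 1 \/ s = -1) -> Rabs (s * x) = Rabs x.
Proof.
  intros [-> | ->]; [now rewrite Rmult_1_l|].
  replace (-1 * x) with (- x) by ring. apply Rabs_Ropp.
Qed.

Lemma nonincreasing_of_derivative_nonpos g g' a b : a <= b ->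
  (forall c, a <= c <= b -> derivable_pt_lim g c (g' c)) ->
  (forall c, a < c < b -> g' c <= 0) -> g b <= g a.
Proof.
  intros [Hab|<-] Hd Hn; [|lra].
  destruct (MVT_cor2 g g' a b Hab Hd) as [c [E Hc]].
  specialize (Hn c Hc). nra.
Qed.

(* [d] is the supremum of the points of [s, t] where [g <= 0]. *)
Lemma last_root_before_positive g s t : s < t ->
  (forall x, s <= x <= t -> continuity_pt g x) -> g s < 0 -> 0 < g t ->
  exists d, s < d < t /\ g d = 0 /\ forall x, d < x <= t -> 0 < g x.
Proof.
  intros Hst Hc Hs Ht.
  set (E := fun x => s <= x <= t /\ g x <= 0).
  destruct (completeness E) as [d [Hub Hlub]].
  { exists t; intros x [Hx _]; lra. }
  { exists s; split; lra. }
  assert (Hsd : s <= d) by (apply Hub; split; lra).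
  assert (Hdt : d <= t) by (apply Hlub; intros x [Hx _]; lra).
  assert (Hpos : forall x, d < x <= t -> 0 < g x).
  { intros x Hx. destruct (Rle_lt_dec (g x) 0) as [Hl|Hl]; auto.
    assert (x <= d) by (apply Hub; split; lra). lra. }
  assert (Hle : g d <= 0).
  { destruct (Rle_lt_dec (g d) 0) as [Hl|Hl]; auto. exfalso.
    destruct (continuity_pt_ball g d (Hc d ltac:(lra)) (g d) Hl) as [alp [Ha Hz]].
    destruct (classic (exists e, E e /\ d - alp < e)) as [[e [[He1 He2] He3]]|Hno].
    - assert (e <= d) by (apply Hub; split; auto).
      specialize (Hz e ltac:(rewrite Rabs_left1; lra)).
      apply Rabs_def2 in Hz. lra.
    - assert (d <= d - alp); [|lra]. apply Hlub. intros e He.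
      destruct (Rle_lt_dec e (d - alp)); auto. exfalso; apply Hno; exists e; auto. }
  assert (Hdt' : d < t) by (destruct Hdt as [H|H]; auto; subst; lra).
  assert (Hge : 0 <= g d).
  { destruct (Rle_lt_dec 0 (g d)) as [Hl|Hl]; auto. exfalso.
    destruct (continuity_pt_ball g d (Hc d ltac:(lra)) (- g d) ltac:(lra)) as [alp [Ha Hz]].
    set (x := Rmin (d + alp / 2) t).
    assert (d < x) by (apply Rmin_glb_lt; lra).
    assert (x <= d + alp / 2) by apply Rmin_l.
    assert (x <= t) by apply Rmin_r.
    specialize (Hz x ltac:(rewrite Rabs_right; lra)). specialize (Hpos x ltac:(lra)).
    apply Rabs_def2 in Hz. lra. }
  exists d. repeat split; auto; try lra.
  destruct Hsd as [H|H]; auto. subst. lra.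
Qed.

Lemma continuous_nonvanishing_sign g a b :
  (forall x, a < x < b -> continuity_pt g x) -> (forall x, a < x < b -> g x <> 0) ->
  exists s, (s = 1 \/ s = -1) /\ forall x, a < x < b -> 0 < s * g x.
Proof.
  intros Hc Hn.
  destruct (classic (forall x, a < x < b -> 0 < g x)) as [Hp|Hp].
  { exists 1. split; auto. intros. rewrite Rmult_1_l. auto. }
  exists (-1). split; auto. intros x Hx.
  destruct (Rlt_dec (g x) 0); [lra|]. exfalso.
  assert (Hgx : 0 < g x) by (specialize (Hn x Hx); lra).
  apply Hp. intros x' Hx'. destruct (Rlt_dec 0 (g x')) as [|Hl']; auto. exfalso.
  assert (Hgx' : g x' < 0) by (specialize (Hn x' Hx'); lra).
  destruct (Rtotal_order x' x) as [H|[H|H]]; [|subst; lra|].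
  - destruct (last_root_before_positive g x' x H) as [d [Hd [Hgd _]]]; auto.
    + intros; apply Hc; lra.
    + apply (Hn d); auto; lra.
  - destruct (last_root_before_positive (fun z => - g z) x x' H) as [d [Hd [Hgd _]]];
      try lra.
    + intros z Hz. apply continuity_pt_opp with (f := g). apply Hc; lra.
    + apply (Hn d); lra.
Qed.

Lemma negative_right_of_root g d l t : d < t -> derivable_pt_lim g d l -> l < 0 ->
  g d = 0 -> exists x, d < x <= t /\ g x < 0.
Proof.
  intros Hdt Hd Hl H0. destruct (Hd (- l / 2) ltac:(lra)) as [del Hdel].
  pose proof (cond_pos del).
  set (h := Rmin (del / 2) (t - d)).
  assert (0 < h) by (apply Rmin_pos; lra).
  assert (h <= del / 2) by apply Rmin_l. assert (h <= t - d) by apply Rmin_r.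
  specialize (Hdel h ltac:(lra) ltac:(rewrite Rabs_right; lra)).
  rewrite H0, Rminus_0_r in Hdel. apply Rabs_def2 in Hdel.
  exists (d + h). split; [lra|].
  assert (Hq : g (d + h) / h < l / 2) by lra.
  apply Rmult_lt_compat_r with (r := h) in Hq; [|lra].
  replace (g (d + h) / h * h) with (g (d + h)) in Hq by (field; lra). nra.
Qed.

Lemma sign_switch_of_no_return g a b : a < b ->
  (forall x y, a < x < y -> y < b -> g x < 0 -> g y <= 0) ->
  exists c, a <= c <= b /\ (forall x, a < x < c -> 0 <= g x) /\
    (forall x, c < x < b -> g x <= 0).
Proof.
  intros Hab Hnr.
  set (E := fun x => a <= x <= b /\ forall w, a < w < x -> 0 <= g w).
  destruct (completeness E) as [c [Hub Hlub]].
  { exists b; intros x [Hx _]; lra. }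
  { exists a; split; [lra| intros; lra]. }
  assert (Hac : a <= c) by (apply Hub; split; [lra| intros; lra]).
  assert (Hcb : c <= b) by (apply Hlub; intros x [Hx _]; lra).
  exists c. repeat split; auto.
  - intros w Hw. destruct (classic (exists x, E x /\ w < x)) as [[x [[_ Hx] Hwx]]|Hno].
    + apply Hx; lra.
    + assert (c <= w); [|lra]. apply Hlub. intros x Hx.
      destruct (Rle_lt_dec x w); auto. exfalso; apply Hno; exists x; auto.
  - intros w Hw. destruct (Rle_lt_dec (g w) 0) as [|Hc]; auto. exfalso.
    assert (w <= c); [|lra]. apply Hub. split; [lra|].
    intros w' Hw'. destruct (Rle_lt_dec 0 (g w')) as [|Hn]; auto.
    pose proof (Hnr w' w ltac:(lra) ltac:(lra) Hn). lra.
Qed.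

Lemma split_list_at (z : R) (l : list R) : exists l1 l2,
  (length l1 + length l2 <= length l)%nat /\
  (In z l -> (length l1 + length l2 < length l)%nat) /\
  (forall x, In x l -> x < z -> In x l1) /\ (forall x, In x l -> z < x -> In x l2).
Proof.
  induction l as [|a l [l1 [l2 [Hle [Hlt [H1 H2]]]]]].
  { exists nil, nil. simpl. repeat split; intros; try lia; tauto. }
  destruct (Rtotal_order a z) as [Ha|[<-|Ha]].
  - exists (a :: l1), l2. simpl. repeat split; try lia.
    + intros [->|Hz]; [lra|]. specialize (Hlt Hz). lia.
    + intros x [->|Hx] Hxz; auto.
    + intros x [->|Hx] Hxz; [lra|auto].
  - exists l1, l2. simpl. repeat split; try lia.
    + intros x [->|Hx] Hxz; [lra|auto].
    + intros x [->|Hx] Hxz; [lra|auto].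
  - exists l1, (a :: l2). simpl. repeat split; try lia.
    + intros [->|Hz]; [lra|]. specialize (Hlt Hz). lia.
    + intros x [->|Hx] Hxz; [lra|auto].
    + intros x [->|Hx] Hxz; auto.
Qed.

Definition fpow_prim (p x : R) : R := Rpower (Rabs x) (p - 1) * (x * x) / (p + 1).

Lemma derivable_pt_lim_sq x : derivable_pt_lim (fun z => z * z) x (2 * x).
Proof.
  replace (2 * x) with (1 * x + x * 1) by ring.
  apply (derivable_pt_lim_mult id id x 1 1); apply derivable_pt_lim_id.
Qed.

Lemma derivable_pt_lim_fpow_prim_neq0 p x s : 1 < p -> x <> 0 ->
  derivable_pt_lim Rabs x s -> s * x = Rabs x ->
  derivable_pt_lim (fpow_prim p) x (fpow p x).
Proof.
  intros Hp Hx Hs Hsx.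
  assert (Hax : 0 < Rabs x) by (apply Rabs_pos_lt; auto).
  pose proof (derivable_pt_lim_comp Rabs (fun z => Rpower z (p - 1)) x s _ Hs
     (derivable_pt_lim_power (Rabs x) (p - 1) Hax)) as D1.
  pose proof (derivable_pt_lim_scal _ (/ (p + 1)) x _
    (derivable_pt_lim_mult _ _ x _ _ D1 (derivable_pt_lim_sq x))) as D.
  replace (fpow p x) with (/ (p + 1) * ((p - 1) * Rpower (Rabs x) (p - 1 - 1) * s * (x * x)
    + Rpower (Rabs x) (p - 1) * (2 * x))).
  - eapply derivable_pt_lim_ext; [|exact D].
    intro y. unfold fpow_prim, mult_real_fct, mult_fct, comp. field. lra.
  - unfold fpow.
    replace (Rpower (Rabs x) (p - 1)) with (Rpower (Rabs x) (p - 1 - 1) * Rabs x)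
      by (rewrite <- Rpower_plus_1 by auto; f_equal; ring).
    rewrite <- Hsx. field. lra.
Qed.

Lemma derivable_pt_lim_fpow_prim p x : 1 < p ->
  derivable_pt_lim (fpow_prim p) x (fpow p x).
Proof.
  intro Hp. destruct (Rtotal_order x 0) as [H|[->|H]].
  - apply (derivable_pt_lim_fpow_prim_neq0 p x (-1)); [lra|lra|now apply Rabs_derive_2|].
    rewrite Rabs_left; lra.
  - unfold fpow. rewrite Rmult_0_r.
    intros eps He. exists (mkposreal (Rmin 1 eps) ltac:(apply Rmin_pos; lra)).
    intros h Hh Hhd. simpl in Hhd.
    assert (Rabs h < 1) by (eapply Rlt_le_trans; [exact Hhd| apply Rmin_l]).
    assert (Rabs h < eps) by (eapply Rlt_le_trans; [exact Hhd| apply Rmin_r]).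
    unfold fpow_prim. rewrite Rplus_0_l, Rmult_0_r.
    replace ((Rpower (Rabs h) (p - 1) * (h * h) / (p + 1)
             - Rpower (Rabs 0) (p - 1) * 0 / (p + 1)) / h - 0)
      with (Rpower (Rabs h) (p - 1) * h / (p + 1)) by (field; lra).
    assert (Rpower (Rabs h) (p - 1) <= 1)
      by (apply Rpower_le_1; [split; [apply Rabs_pos_lt; auto|lra]|lra]).
    pose proof (Rpower_pos (Rabs h) (p - 1)).
    unfold Rdiv. rewrite !Rabs_mult, (Rabs_right (Rpower _ _)) by lra.
    rewrite (Rabs_right (/ (p + 1))) by (left; apply Rinv_0_lt_compat; lra).
    assert (/ (p + 1) <= 1) by (rewrite <- Rinv_1; apply Rinv_le_contravar; lra).
    pose proof (Rabs_pos h). pose proof (Rinv_0_lt_compat (p + 1) ltac:(lra)).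
    apply Rle_lt_trans with (1 * Rabs h * 1); [|lra].
    apply Rmult_le_compat; nra.
  - apply (derivable_pt_lim_fpow_prim_neq0 p x 1); [lra|lra|now apply Rabs_derive_1|].
    rewrite Rabs_right; lra.
Qed.

Lemma fpow_prim_nonneg p x : 1 < p -> 0 <= fpow_prim p x.
Proof.
  intro. unfold fpow_prim. pose proof (Rpower_pos (Rabs x) (p - 1)).
  apply Rmult_le_pos; [nra| left; apply Rinv_0_lt_compat; lra].
Qed.

Lemma fpow_prim_le_sq p w : 1 < p -> Rabs w <= 1 -> fpow_prim p w <= w ^ 2.
Proof.
  intros Hp Hw. unfold fpow_prim.
  destruct (Req_dec w 0) as [->|Hw0].
  { rewrite Rmult_0_l, Rmult_0_r. unfold Rdiv. lra. }
  assert (Rpower (Rabs w) (p - 1) <= 1)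
    by (apply Rpower_le_1; [split; [apply Rabs_pos_lt; auto|lra]|lra]).
  pose proof (Rpower_pos (Rabs w) (p - 1)).
  apply Rmult_le_reg_l with (p + 1); [lra|].
  replace ((p + 1) * (Rpower (Rabs w) (p - 1) * (w * w) / (p + 1)))
    with (Rpower (Rabs w) (p - 1) * (w * w)) by (field; lra).
  nra.
Qed.

Lemma fpow_prim_ge_sq p b T w : 1 < p -> 0 < T <= Rabs w ->
  (p + 1) * b <= Rpower T (p - 1) -> b * w ^ 2 <= fpow_prim p w.
Proof.
  intros Hp HT HTp.
  assert (Rpower T (p - 1) <= Rpower (Rabs w) (p - 1)) by (apply Rle_Rpower_l; lra).
  unfold fpow_prim. apply Rmult_le_reg_l with (p + 1); [lra|].
  replace ((p + 1) * (Rpower (Rabs w) (p - 1) * (w * w) / (p + 1)))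
    with (Rpower (Rabs w) (p - 1) * (w * w)) by (field; lra).
  assert (0 <= w * w) by nra. simpl. nra.
Qed.

Definition hamiltonian (b p w z : R) : R := z ^ 2 / 2 - b / 2 * w ^ 2 + fpow_prim p w.

Lemma hamiltonian_abs_le b p w z : 1 < p -> 0 < b -> Rabs w <= 1 ->
  Rabs (hamiltonian b p w z) <= z ^ 2 + (b + 1) * w ^ 2.
Proof.
  intros Hp Hb Hw. unfold hamiltonian.
  pose proof (fpow_prim_nonneg p w Hp). pose proof (fpow_prim_le_sq p w Hp Hw).
  pose proof (pow2_ge_0 z). pose proof (pow2_ge_0 w).
  apply Rabs_le. nra.
Qed.

Lemma hamiltonian_w_sq_le b p T w z S : 1 < p -> 0 < b -> 0 < T -> 0 <= S ->
  (p + 1) * b <= Rpower T (p - 1) -> hamiltonian b p w z <= S ->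
  w ^ 2 <= 2 * S / b + T ^ 2.
Proof.
  intros Hp Hb HT HS HTp HH. unfold hamiltonian in HH.
  assert (0 <= 2 * S / b) by (apply Rdiv_nonneg_pos; lra).
  destruct (Rle_lt_dec (Rabs w) T) as [Hw|Hw].
  - assert (w ^ 2 <= T ^ 2); [|lra].
    rewrite <- !Rsqr_pow2. apply Rsqr_le_abs_1. rewrite (Rabs_right T); lra.
  - pose proof (fpow_prim_ge_sq p b T w Hp ltac:(lra) HTp).
    pose proof (pow2_ge_0 z). pose proof (pow2_ge_0 T).
    assert (w ^ 2 <= 2 * S / b); [|lra].
    apply Rmult_le_reg_l with b; [lra|].
    replace (b * (2 * S / b)) with (2 * S) by (field; lra). lra.
Qed.

Lemma hamiltonian_z_sq_le b p w z S : 1 < p -> hamiltonian b p w z <= S ->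
  z ^ 2 <= 2 * S + b * w ^ 2.
Proof.
  intros Hp HH. unfold hamiltonian in HH. pose proof (fpow_prim_nonneg p w Hp). lra.
Qed.

Lemma hamiltonian_at_rest_nonneg b p w : 1 < p -> w <> 0 -> 0 <= hamiltonian b p w 0 ->
  b * (p + 1) / 2 <= Rpower (Rabs w) (p - 1).
Proof.
  intros Hp Hw HH. unfold hamiltonian, fpow_prim in HH.
  assert (0 < w * w) by (destruct (Rtotal_order w 0) as [|[|]]; [nra|lra|nra]).
  apply Rmult_le_reg_l with (w * w / (p + 1)); [apply Rdiv_lt_0_compat; lra|].
  replace (w * w / (p + 1) * (b * (p + 1) / 2)) with (b / 2 * (w * w)) by (field; lra).
  simpl in HH. unfold Rdiv in *. nra.
Qed.

Definition ef_n (N : nat) : R := INR N - 2.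
Definition ef_k (p : R) : R := 2 / (p - 1).
Definition ef_A (N : nat) (p : R) : R := 2 * ef_k p - ef_n N.
Definition ef_b (N : nat) (p : R) : R := ef_k p * (ef_n N - ef_k p).
Definition ef_v (p : R) (u : R -> R) (r : R) : R := Rpower r (ef_k p) * u r.
Definition ef_y (p : R) (u u1 : R -> R) (r : R) : R :=
  Rpower r (ef_k p + 1) * u1 r + ef_k p * Rpower r (ef_k p) * u r.
Definition ef_energy (N : nat) (p : R) (u u1 : R -> R) (r : R) : R :=
  hamiltonian (ef_b N p) p (ef_v p u r) (ef_y p u u1 r).

Lemma fpow_scale p r w : 1 < p -> 0 < r ->
  fpow p (Rpower r (ef_k p) * w) = Rpower r (ef_k p) * (r * r) * fpow p w.
Proof.
  intros Hp Hr. unfold fpow. destruct (Req_dec w 0) as [->|Hw]; [ring|].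
  pose proof (Rpower_pos r (ef_k p)).
  rewrite Rabs_mult, (Rabs_right (Rpower _ _)) by lra.
  rewrite <- Rpower_mult_distr, Rpower_mult by (auto; apply Rabs_pos_lt; auto).
  replace (ef_k p * (p - 1)) with (INR 2) by (unfold ef_k; simpl; field; lra).
  rewrite Rpower_pow by auto. simpl. ring.
Qed.

Lemma derivable_pt_lim_ef_v p u u1 r : 0 < r -> derivable_pt_lim u r (u1 r) ->
  derivable_pt_lim (ef_v p u) r (ef_y p u u1 r / r).
Proof.
  intros Hr Du.
  replace (ef_y p u u1 r / r)
    with (ef_k p * Rpower r (ef_k p - 1) * u r + Rpower r (ef_k p) * u1 r).
  - apply (derivable_pt_lim_mult _ _ r _ _ (derivable_pt_lim_power r (ef_k p) Hr) Du).
  - unfold ef_y. rewrite Rpower_minus_1, Rpower_plus_1 by auto. field. lra.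
Qed.

Lemma derivable_pt_lim_ef_y N p u u1 u2 r : 1 < p -> 0 < r ->
  derivable_pt_lim u r (u1 r) -> derivable_pt_lim u1 r (u2 r) ->
  u2 r + (INR N - 1) / r * u1 r + fpow p (u r) = 0 ->
  derivable_pt_lim (ef_y p u u1) r
    ((ef_A N p * ef_y p u u1 r + ef_b N p * ef_v p u r - fpow p (ef_v p u r)) / r).
Proof.
  intros Hp Hr Du Du1 Hode.
  pose proof (derivable_pt_lim_plus _ _ r _ _
    (derivable_pt_lim_mult _ _ r _ _ (derivable_pt_lim_power r (ef_k p + 1) Hr) Du1)
    (derivable_pt_lim_scal _ (ef_k p) r _
      (derivable_pt_lim_mult _ _ r _ _ (derivable_pt_lim_power r (ef_k p) Hr) Du))) as D.
  apply (derivable_pt_lim_ext _ (ef_y p u u1)) in D;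
    [|intro; unfold ef_y, mult_real_fct, mult_fct, plus_fct; ring].
  apply (eq_ind _ (derivable_pt_lim _ r) D).
  unfold ef_v. rewrite fpow_scale by auto.
  replace (u2 r) with (- ((INR N - 1) / r * u1 r + fpow p (u r))) by lra.
  unfold ef_y, ef_A, ef_b, ef_n.
  replace (ef_k p + 1 - 1) with (ef_k p) by ring.
  rewrite Rpower_minus_1, Rpower_plus_1 by auto. field. lra.
Qed.

Lemma derivable_pt_lim_ef_energy N p u u1 u2 r : 1 < p -> 0 < r ->
  derivable_pt_lim u r (u1 r) -> derivable_pt_lim u1 r (u2 r) ->
  u2 r + (INR N - 1) / r * u1 r + fpow p (u r) = 0 ->
  derivable_pt_lim (ef_energy N p u u1) r (ef_A N p * ef_y p u u1 r ^ 2 / r).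
Proof.
  intros Hp Hr Du Du1 Hode.
  pose proof (derivable_pt_lim_ef_y N p u u1 u2 r Hp Hr Du Du1 Hode) as Dy.
  pose proof (derivable_pt_lim_ef_v p u u1 r Hr Du) as Dv.
  pose proof (derivable_pt_lim_plus _ _ r _ _
    (derivable_pt_lim_minus _ _ r _ _
      (derivable_pt_lim_scal _ (/ 2) r _
        (derivable_pt_lim_comp _ _ r _ _ Dy (derivable_pt_lim_sq (ef_y p u u1 r))))
      (derivable_pt_lim_scal _ (ef_b N p / 2) r _
        (derivable_pt_lim_comp _ _ r _ _ Dv (derivable_pt_lim_sq (ef_v p u r)))))
    (derivable_pt_lim_comp _ _ r _ _ Dv
      (derivable_pt_lim_fpow_prim p (ef_v p u r) Hp))) as D.
  apply (derivable_pt_lim_ext _ (ef_energy N p u u1)) in D;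
    [|intro; unfold ef_energy, hamiltonian, comp, mult_real_fct, minus_fct, plus_fct; field].
  apply (eq_ind _ (derivable_pt_lim _ r) D).
  field. lra.
Qed.

(* Chosen so that [32 A m <= 1/2], the smallness used to absorb the nodal increments. *)
Definition ef_delta (N m : nat) : R := 3 / (64 * INR m * ef_n N ^ 2).

Lemma ef_n_ge_1 N : (3 <= N)%nat -> 1 <= ef_n N.
Proof. intro HN. unfold ef_n. apply le_INR in HN. simpl in HN. lra. Qed.

Lemma near_pS_range N m p : (3 <= N)%nat -> (1 <= m)%nat ->
  pS N - ef_delta N m <= p < pS N ->
  3 <= (p - 1) * ef_n N < 4 /\ 4 - (p - 1) * ef_n N <= ef_delta N m * ef_n N.
Proof.
  intros HN Hm Hp. pose proof (ef_n_ge_1 N HN) as Hn.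
  assert (HM : 1 <= INR m) by (apply le_INR in Hm; simpl in Hm; lra).
  set (n := ef_n N) in *.
  assert (HpS : pS N = (n + 4) / n) by (unfold pS, n, ef_n; f_equal; ring).
  rewrite HpS in Hp. unfold ef_delta in *. fold n in Hp |- *.
  assert (Hd : 3 / (64 * INR m * n ^ 2) * n <= 1).
  { apply Rmult_le_reg_l with (64 * INR m * n ^ 2); [nra|].
    field_simplify; [|nra]. nra. }
  assert (Hq : (p - 1) * n = 4 - ((n + 4) / n - p) * n) by (field; lra).
  assert (0 <= ((n + 4) / n - p) * n <= 3 / (64 * INR m * n ^ 2) * n) by (split; nra).
  split; [split|]; nra.
Qed.

Lemma ef_k_range n p : 1 <= n -> 3 <= (p - 1) * n < 4 ->
  1 < p /\ n / 2 < ef_k p <= 2 * n / 3.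
Proof.
  intros Hn Hpn.
  assert (Hp : 1 < p) by nra. split; [auto|].
  unfold ef_k. split.
  - apply Rmult_lt_reg_r with (2 * (p - 1)); [lra|].
    replace (2 / (p - 1) * (2 * (p - 1))) with 4 by (field; lra). nra.
  - apply Rmult_le_reg_r with (3 * (p - 1)); [lra|].
    replace (2 / (p - 1) * (3 * (p - 1))) with 6 by (field; lra). nra.
Qed.

Lemma ef_b_range n k : n / 2 < k <= 2 * n / 3 -> n ^ 2 / 6 <= k * (n - k) <= n ^ 2 / 4.
Proof. intro Hk. split; nra. Qed.

Lemma ef_A_small N m p : (3 <= N)%nat -> (1 <= m)%nat ->
  pS N - ef_delta N m <= p < pS N -> 0 <= ef_A N p /\ 32 * ef_A N p * INR m <= 1 / 2.
Proof.
  intros HN Hm Hp.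
  destruct (near_pS_range N m p HN Hm Hp) as [Hpn Hd].
  pose proof (ef_n_ge_1 N HN) as Hn.
  destruct (ef_k_range _ _ Hn Hpn) as [Hp1 _].
  assert (HM : 1 <= INR m) by (apply le_INR in Hm; simpl in Hm; lra).
  set (n := ef_n N) in *.
  assert (HA : ef_A N p * (p - 1) = 4 - (p - 1) * n) by (unfold ef_A, ef_k; fold n; field; lra).
  assert (0 <= ef_A N p) by nra. split; [auto|].
  unfold ef_delta in Hd. fold n in Hd.
  assert (H3 : 3 * ef_A N p <= ef_A N p * (p - 1) * n) by nra.
  apply Rmult_le_reg_l with 3; [lra|].
  apply Rle_trans with (32 * INR m * (ef_A N p * (p - 1) * n)); [nra|].
  rewrite HA.
  apply Rle_trans with (32 * INR m * (3 / (64 * INR m * n ^ 2) * n * n));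
    [apply Rmult_le_compat_l; nra|].
  right. field. lra.
Qed.

(* Beyond [|v| = T] the nonlinearity dominates, [(p + 1) b <= T^(p-1)], uniformly in
   the admissible [p]; the caps are the resulting bounds for [H], [v^2], [y^2] and [r^k r |u'|]. *)
Definition ef_T (n : R) : R := Rpower (3 * n ^ 2 / 2) (n / 3).
Definition energy_cap (n : R) : R := (n ^ 2 / 4 + 1) * ef_T n ^ 2 / 16.
Definition v_cap (n : R) : R := 12 * energy_cap n / n ^ 2 + ef_T n ^ 2.
Definition y_cap (n : R) : R := 2 * energy_cap n + n ^ 2 / 4 * v_cap n.
Definition derivative_cap (n : R) : R := sqrt (y_cap n) + 2 * n / 3 * sqrt (v_cap n).

Lemma ef_T_ge_1 n : 1 <= n -> 1 <= ef_T n.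
Proof.
  intro Hn. unfold ef_T. rewrite <- (Rpower_O (3 * n ^ 2 / 2)) by nra.
  apply Rle_Rpower; nra.
Qed.

Lemma ef_T_Rpower_ge n q : 1 <= n -> 3 / n <= q -> 3 * n ^ 2 / 2 <= Rpower (ef_T n) q.
Proof.
  intros Hn Hq. apply Rle_trans with (Rpower (ef_T n) (3 / n)).
  - unfold ef_T. rewrite Rpower_mult. replace (n / 3 * (3 / n)) with 1 by (field; lra).
    rewrite Rpower_1; nra.
  - apply Rle_Rpower; [apply ef_T_ge_1|]; auto.
Qed.

Lemma derivative_cap_pos n : 1 <= n -> 0 < derivative_cap n.
Proof.
  intro Hn. pose proof (ef_T_ge_1 n Hn).
  assert (0 <= energy_cap n) by (unfold energy_cap; nra).
  assert (Hv : 0 < v_cap n).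
  { unfold v_cap. assert (0 <= 12 * energy_cap n / n ^ 2); [apply Rdiv_nonneg_pos|]; nra. }
  assert (0 <= y_cap n) by (unfold y_cap; nra).
  unfold derivative_cap. pose proof (sqrt_lt_R0 _ Hv). pose proof (sqrt_pos (y_cap n)). nra.
Qed.

Lemma ef_T_admissible N p : 1 <= ef_n N -> 3 <= (p - 1) * ef_n N < 4 ->
  (p + 1) * ef_b N p <= Rpower (ef_T (ef_n N)) (p - 1).
Proof.
  intros Hn Hpn. set (n := ef_n N) in *.
  destruct (ef_k_range n p Hn Hpn) as [Hp Hk].
  pose proof (ef_b_range n (ef_k p) Hk) as Hb.
  apply Rle_trans with (3 * n ^ 2 / 2).
  - unfold ef_b. fold n. assert (p + 1 <= 6) by nra. nra.
  - apply ef_T_Rpower_ge; auto.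
    apply Rmult_le_reg_r with n; [lra|]. replace (3 / n * n) with 3 by (field; lra). lra.
Qed.

Section RadialEnergy.

Variables (N : nat) (p : R) (u u1 u2 : R -> R).
Hypothesis p_gt_1 : 1 < p.
Hypothesis A_ge_0 : 0 <= ef_A N p.
Hypothesis b_gt_0 : 0 < ef_b N p.
Hypothesis u_deriv : forall r, 0 < r < 1 -> derivable_pt_lim u r (u1 r).
Hypothesis u1_deriv : forall r, 0 < r < 1 -> derivable_pt_lim u1 r (u2 r).
Hypothesis radial_ode :
  forall r, 0 < r < 1 -> u2 r + (INR N - 1) / r * u1 r + fpow p (u r) = 0.
Hypothesis u_cont_0 : continuity_pt u 0.
Hypothesis u1_cont_0 : continuity_pt u1 0.
Hypothesis u1_0 : u1 0 = 0.

Local Notation v := (ef_v p u).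
Local Notation y := (ef_y p u u1).
Local Notation H := (ef_energy N p u u1).
Local Notation A := (ef_A N p).
Local Notation b := (ef_b N p).

Lemma ef_k_gt_0 : 0 < ef_k p.
Proof. unfold ef_k. apply Rdiv_lt_0_compat; lra. Qed.

Lemma ef_v_deriv r : 0 < r < 1 -> derivable_pt_lim v r (y r / r).
Proof. intro Hr. apply derivable_pt_lim_ef_v; [lra|auto]. Qed.

Lemma ef_y_deriv r : 0 < r < 1 ->
  derivable_pt_lim y r ((A * y r + b * v r - fpow p (v r)) / r).
Proof. intro Hr. apply (derivable_pt_lim_ef_y N p u u1 u2); auto; lra. Qed.

Lemma energy_deriv r : 0 < r < 1 -> derivable_pt_lim H r (A * y r ^ 2 / r).
Proof. intro Hr. apply (derivable_pt_lim_ef_energy N p u u1 u2); auto; lra. Qed.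

Lemma energy_nondecreasing r1 r2 : 0 < r1 <= r2 -> r2 < 1 -> H r1 <= H r2.
Proof.
  intros Hr1 Hr2.
  enough (- H r2 <= - H r1) by lra.
  apply (nonincreasing_of_derivative_nonpos (fun r => - H r)
    (fun r => - (A * y r ^ 2 / r))); [lra| |].
  - intros c Hc. apply derivable_pt_lim_opp, energy_deriv. lra.
  - intros c Hc. enough (0 <= A * y c ^ 2 / c) by lra.
    apply Rdiv_nonneg_pos; [apply Rmult_le_pos; [auto|apply pow2_ge_0]|lra].
Qed.

Lemma ef_v_y_abs_le x U : 0 < x <= 1 -> Rabs (u x) <= U -> Rabs (u1 x) <= 1 ->
  Rabs (v x) <= Rpower x (ef_k p) * (1 + (1 + ef_k p) * U) /\
  Rabs (y x) <= Rpower x (ef_k p) * (1 + (1 + ef_k p) * U).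
Proof.
  intros Hx Hu Hu1. pose proof ef_k_gt_0 as Hk.
  set (P := Rpower x (ef_k p)). assert (HP : 0 < P) by apply Rpower_pos.
  pose proof (Rabs_pos (u x)) as Hu0. pose proof (Rabs_pos (u1 x)) as Hu10.
  unfold ef_v, ef_y. rewrite Rpower_plus_1 by lra. fold P. split.
  - rewrite Rabs_mult, (Rabs_right P) by lra.
    assert (P * Rabs (u x) <= P * U) by (apply Rmult_le_compat_l; lra).
    assert (0 <= P * (ef_k p * U)) by (apply Rmult_le_pos; nra). nra.
  - eapply Rle_trans; [apply Rabs_triang|].
    rewrite !Rabs_mult, (Rabs_right P), (Rabs_right x), (Rabs_right (ef_k p)) by lra.
    assert (P * x * Rabs (u1 x) <= P * 1 * 1) by (apply Rmult_le_compat; nra).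
    assert (ef_k p * P * Rabs (u x) <= ef_k p * P * U) by (apply Rmult_le_compat_l; nra).
    nra.
Qed.

(* [v] and [y] carry the factor [r^k], which beats the bounds on [u] and [u'] near [0]. *)
Lemma ef_v_y_small_near_0 r0 eps : 0 < r0 -> 0 < eps ->
  exists al, 0 < al < r0 /\ al < 1 /\ Rabs (v al) <= eps /\ Rabs (y al) <= eps.
Proof.
  intros Hr0 He. pose proof ef_k_gt_0 as Hk.
  destruct (continuity_pt_bounded_near u 0 u_cont_0) as [a1 [Ha1 Hu]].
  destruct (continuity_pt_bounded_near u1 0 u1_cont_0) as [a2 [Ha2 Hu1]].
  rewrite u1_0, Rabs_R0, Rplus_0_l in Hu1.
  set (U := Rabs (u 0) + 1).
  assert (HU : 0 < U) by (unfold U; pose proof (Rabs_pos (u 0)); lra).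
  set (rho := eps / (1 + (1 + ef_k p) * U)).
  assert (Hrho : 0 < rho) by (apply Rdiv_lt_0_compat; nra).
  set (al := Rmin (Rmin (a1 / 2) (a2 / 2)) (Rmin (Rmin (r0 / 2) (1 / 2)) (Rpower rho (/ ef_k p)))).
  assert (Hal : 0 < al) by (repeat apply Rmin_pos; try lra; apply Rpower_pos).
  assert (al <= a1 / 2 /\ al <= a2 / 2 /\ al <= r0 / 2 /\ al <= 1 / 2 /\
          al <= Rpower rho (/ ef_k p)) as (Hal1 & Hal2 & Hal3 & Hal4 & Hal5).
  { unfold al. repeat split.
    - eapply Rle_trans; apply Rmin_l.
    - eapply Rle_trans; [apply Rmin_l|apply Rmin_r].
    - eapply Rle_trans; [apply Rmin_r|]. eapply Rle_trans; apply Rmin_l.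
    - eapply Rle_trans; [apply Rmin_r|]. eapply Rle_trans; [apply Rmin_l|apply Rmin_r].
    - eapply Rle_trans; apply Rmin_r. }
  exists al. split; [lra|]. split; [lra|].
  assert (HP : Rpower al (ef_k p) <= rho).
  { apply Rle_trans with (Rpower (Rpower rho (/ ef_k p)) (ef_k p)).
    - apply Rle_Rpower_l; lra.
    - rewrite Rpower_mult, Rinv_l, Rpower_1; lra. }
  assert (HPe : Rpower al (ef_k p) * (1 + (1 + ef_k p) * U) <= eps).
  { apply Rle_trans with (rho * (1 + (1 + ef_k p) * U)); [apply Rmult_le_compat_r; nra|].
    unfold rho. right. field. nra. }
  destruct (ef_v_y_abs_le al U ltac:(lra)) as [Hv Hy].
  - apply Hu. rewrite Rminus_0_r, Rabs_right; lra.
  - apply Hu1. rewrite Rminus_0_r, Rabs_right; lra.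
  - split; lra.
Qed.

Lemma energy_small_near_0 r0 eps : 0 < r0 -> 0 < eps ->
  exists al, 0 < al < r0 /\ Rabs (H al) <= eps.
Proof.
  intros Hr0 He.
  set (e := Rmin 1 (eps / (b + 2))).
  assert (He0 : 0 < e) by (apply Rmin_pos; [lra|apply Rdiv_lt_0_compat; lra]).
  assert (He1 : e <= 1) by apply Rmin_l.
  assert (He2 : e <= eps / (b + 2)) by apply Rmin_r.
  destruct (ef_v_y_small_near_0 r0 e Hr0 He0) as [al [Hal [_ [Hv Hy]]]].
  exists al. split; [auto|].
  eapply Rle_trans; [apply hamiltonian_abs_le; auto; lra|].
  assert (v al ^ 2 <= e ^ 2 /\ y al ^ 2 <= e ^ 2) as [Hv2 Hy2].
  { rewrite <- !Rsqr_pow2. split; apply Rsqr_le_abs_1; rewrite (Rabs_right e); lra. }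
  assert ((b + 1) * v al ^ 2 <= (b + 1) * e ^ 2) by (apply Rmult_le_compat_l; lra).
  apply Rle_trans with ((b + 2) * e ^ 2); [lra|].
  apply Rle_trans with ((b + 2) * e); [apply Rmult_le_compat_l; simpl; nra|].
  apply Rmult_le_reg_r with (/ (b + 2)); [apply Rinv_0_lt_compat; lra|].
  replace ((b + 2) * e * / (b + 2)) with e by (field; lra). exact He2.
Qed.

Lemma energy_nonneg r : 0 < r < 1 -> 0 <= H r.
Proof.
  intro Hr. apply Rle_plus_epsilon. intros eps He.
  destruct (energy_small_near_0 r eps ltac:(lra) He) as [al [Hal Hsmall]].
  pose proof (energy_nondecreasing al r ltac:(lra) ltac:(lra)) as Hmono.
  pose proof (Rle_abs (- H al)) as Habs. rewrite Rabs_Ropp in Habs. lra.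
Qed.

(* At a zero of [y] with [v <> 0], [H >= 0] forces [|v|^(p-1) > b], so [s y] has negative
   slope there: once [s y] is negative it cannot become positive again. *)
Lemma ef_y_no_return s al be : (s = 1 \/ s = -1) -> 0 < al -> be < 1 ->
  (forall x, al < x < be -> 0 < s * v x) ->
  forall a c, al < a < c -> c < be -> s * y a < 0 -> s * y c <= 0.
Proof.
  intros Hs Hal Hbe Hsv a c Hac Hc Ha.
  destruct (Rle_lt_dec (s * y c) 0) as [|Hpos]; auto. exfalso.
  assert (Dg : forall x, al < x < be ->
    derivable_pt_lim (fun z => s * y z) x (s * ((A * y x + b * v x - fpow p (v x)) / x))).
  { intros x Hx. apply derivable_pt_lim_scal with (f := y), ef_y_deriv. lra. }
  destruct (last_root_before_positive (fun z => s * y z) a c ltac:(lra)) as [d [Hd [Hgd Hgt]]];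
    auto.
  { intros x Hx. eapply derivable_pt_lim_continuity_pt. apply Dg. lra. }
  assert (Hy0 : y d = 0) by (destruct Hs as [-> | ->]; lra).
  set (w := v d) in *.
  assert (Hw : 0 < s * w) by (apply Hsv; lra).
  assert (Hwa : Rabs w = s * w) by (rewrite <- (sign_mult_abs s w Hs); apply Rabs_right; lra).
  assert (HR : b * (p + 1) / 2 <= Rpower (Rabs w) (p - 1)).
  { apply hamiltonian_at_rest_nonneg; [lra|intro Hw0; rewrite Hw0, Rmult_0_r in Hw; lra|].
    replace (hamiltonian b p w 0) with (H d) by (unfold ef_energy; now rewrite Hy0).
    apply energy_nonneg. lra. }
  destruct (negative_right_of_root (fun z => s * y z) d _ c ltac:(lra) (Dg d ltac:(lra)))
    as [x [Hx Hgx]]; auto.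
  - rewrite Hy0. fold w. unfold fpow. rewrite Hwa.
    replace (s * ((A * 0 + b * w - Rpower (s * w) (p - 1) * w) / d))
      with ((b - Rpower (s * w) (p - 1)) * (s * w) / d) by (field; lra).
    assert (b < b * (p + 1) / 2) by nra.
    apply Rdiv_neg_pos; [|lra]. rewrite <- Hwa. apply Rmult_neg_pos; lra.
  - specialize (Hgt x Hx). lra.
Qed.

Lemma energy_increment_of_sign t a c W : (t = 1 \/ t = -1) -> 0 < a <= c -> c < 1 ->
  (forall x, a < x < c -> 0 <= t * y x) -> (forall x, a <= x <= c -> Rabs (y x) <= W) ->
  H c - H a <= A * W * (t * v c - t * v a).
Proof.
  intros Ht Hac Hc Hty HW.
  enough (H c - t * (A * W) * v c <= H a - t * (A * W) * v a) by lra.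
  apply (nonincreasing_of_derivative_nonpos (fun x => H x - t * (A * W) * v x)
    (fun x => A * y x ^ 2 / x - t * (A * W) * (y x / x))); [lra| |].
  - intros x Hx. apply derivable_pt_lim_minus with (f1 := H) (f2 := fun z => t * (A * W) * v z).
    + apply energy_deriv. lra.
    + apply derivable_pt_lim_scal with (f := v), ef_v_deriv. lra.
  - intros x Hx.
    assert (Hy : t * y x <= W).
    { eapply Rle_trans; [apply Rle_abs|]. rewrite sign_mult_abs by auto. apply HW. lra. }
    specialize (Hty x Hx).
    replace (A * y x ^ 2 / x - t * (A * W) * (y x / x))
      with (- (A * ((t * y x) * (W - t * y x))) / x)
      by (rewrite <- (sign_mult_sq t (y x) Ht); field; lra).
    unfold Rdiv. enough (0 <= A * ((t * y x) * (W - t * y x)) * / x) by lra.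
    apply Rmult_le_pos; [apply Rmult_le_pos; nra|left; apply Rinv_0_lt_compat; lra].
Qed.

(* On a nodal interval [s y] changes sign at most once, from [+] to [-]; on each of the two
   pieces [H - A W (+-s) v] is monotone. *)
Lemma energy_increment_nodal al be W V : 0 < al < be -> be < 1 ->
  (forall x, al < x < be -> u x <> 0) ->
  (forall x, al <= x <= be -> Rabs (y x) <= W /\ Rabs (v x) <= V) ->
  H be - H al <= 4 * A * W * V.
Proof.
  intros Hab Hbe Hnz Hbd.
  destruct (continuous_nonvanishing_sign u al be) as [s [Hs Hsu]]; auto.
  { intros x Hx. eapply derivable_pt_lim_continuity_pt, u_deriv. lra. }
  assert (Hsv : forall x, al < x < be -> 0 < s * v x).
  { intros x Hx. unfold ef_v. pose proof (Rpower_pos x (ef_k p)). specialize (Hsu x Hx).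
    replace (s * (Rpower x (ef_k p) * u x)) with (Rpower x (ef_k p) * (s * u x)) by ring. nra. }
  destruct (sign_switch_of_no_return (fun x => s * y x) al be ltac:(lra)
    (ef_y_no_return s al be Hs ltac:(lra) Hbe Hsv)) as [c [Hc [Hleft Hright]]].
  assert (HW : forall x, al <= x <= be -> Rabs (y x) <= W) by (intros; apply Hbd; auto).
  assert (HV : forall x, al <= x <= be -> Rabs (s * v x) <= V)
    by (intros; rewrite sign_mult_abs by auto; apply Hbd; auto).
  pose proof (energy_increment_of_sign s al c W Hs ltac:(lra) ltac:(lra) Hleft
    ltac:(intros; apply HW; lra)) as E1.
  pose proof (energy_increment_of_sign (- s) c be W ltac:(destruct Hs; [right|left]; lra)
    ltac:(lra) Hbe ltac:(intros x Hx; specialize (Hright x Hx); lra)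
    ltac:(intros; apply HW; lra)) as E2.
  assert (0 <= A * W) by (apply Rmult_le_pos; auto;
    apply Rle_trans with (Rabs (y al)); [apply Rabs_pos|apply HW; lra]).
  assert (s * v c - s * v al <= 2 * V /\ - s * v be - - s * v c <= 2 * V) as [Hv1 Hv2].
  { assert (forall x, al <= x <= be -> - V <= s * v x <= V) as Hint.
    { intros x Hx. pose proof (HV x Hx). pose proof (Rle_abs (s * v x)).
      pose proof (Rle_abs (- (s * v x))). rewrite Rabs_Ropp in *. lra. }
    pose proof (Hint al ltac:(lra)). pose proof (Hint c ltac:(lra)).
    pose proof (Hint be ltac:(lra)). split; lra. }
  assert (A * W * (s * v c - s * v al) <= A * W * (2 * V)) by (apply Rmult_le_compat_l; auto).
  assert (A * W * (- s * v be - - s * v c) <= A * W * (2 * V)) by (apply Rmult_le_compat_l; auto).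
  lra.
Qed.

Lemma energy_increment_le_zeros W V r0 : r0 < 1 ->
  (forall x, 0 < x <= r0 -> Rabs (y x) <= W /\ Rabs (v x) <= V) ->
  forall l al be, 0 < al < be -> be <= r0 ->
  (forall x, al < x < be -> u x = 0 -> In x l) ->
  H be - H al <= 4 * A * W * V * INR (length l + 1).
Proof.
  intros Hr0 Hbd l. induction l as [l IH] using (induction_ltof1 _ (@length R)).
  intros al be Hab Hbe Hz.
  assert (HK : 0 <= 4 * A * W * V).
  { destruct (Hbd al ltac:(lra)) as [Hy Hv].
    pose proof (Rabs_pos (y al)). pose proof (Rabs_pos (v al)).
    repeat apply Rmult_le_pos; lra. }
  assert (HL : 1 <= INR (length l + 1))
    by (rewrite plus_INR; simpl; pose proof (pos_INR (length l)); lra).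
  destruct (classic (exists z, al < z < be /\ u z = 0)) as [[z [Hz1 Hz2]]|Hno].
  - destruct (split_list_at z l) as [l1 [l2 [_ [Hlt [Hl1 Hl2]]]]].
    specialize (Hlt (Hz z Hz1 Hz2)).
    pose proof (IH l1 ltac:(unfold ltof; lia) al z ltac:(lra) ltac:(lra)
      ltac:(intros x Hx Hux; apply Hl1; [apply Hz; auto; lra|lra])) as E1.
    pose proof (IH l2 ltac:(unfold ltof; lia) z be ltac:(lra) ltac:(lra)
      ltac:(intros x Hx Hux; apply Hl2; [apply Hz; auto; lra|lra])) as E2.
    assert (INR (length l1 + 1) + INR (length l2 + 1) <= INR (length l + 1))
      by (rewrite <- plus_INR; apply le_INR; lia).
    nra.
  - assert (H be - H al <= 4 * A * W * V); [|nra].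
    apply energy_increment_nodal; try lra.
    + intros x Hx Hux. apply Hno. exists x. auto.
    + intros x Hx. apply Hbd. lra.
Qed.

Lemma ef_v_y_sq_le_energy T r0 x : 0 < T -> (p + 1) * b <= Rpower T (p - 1) ->
  0 < x <= r0 -> r0 < 1 ->
  v x ^ 2 <= 2 * H r0 / b + T ^ 2 /\ y x ^ 2 <= 2 * H r0 + b * (2 * H r0 / b + T ^ 2).
Proof.
  intros HT HTp Hx Hr0.
  pose proof (energy_nondecreasing x r0 ltac:(lra) Hr0) as Hmono.
  assert (Hv : v x ^ 2 <= 2 * H r0 / b + T ^ 2).
  { eapply hamiltonian_w_sq_le; eauto. apply energy_nonneg. lra. }
  split; [auto|].
  apply Rle_trans with (2 * H r0 + b * v x ^ 2); [eapply hamiltonian_z_sq_le; eauto|].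
  apply Rplus_le_compat_l, Rmult_le_compat_l; lra.
Qed.

Lemma energy_increment_bound m zs T al r0 : 0 < al < r0 -> r0 < 1 -> 0 < T ->
  (p + 1) * b <= Rpower T (p - 1) -> 1 <= 6 * b -> (1 <= m)%nat ->
  length zs = (m - 1)%nat -> (forall r, 0 < r < 1 -> u r = 0 -> In r zs) ->
  H r0 - H al <= 2 * (A * INR m) * (16 * H r0 + (b + 1) * T ^ 2).
Proof.
  intros Hal Hr0 HT HTp Hb6 Hm Hlen Hzs.
  set (S := H r0). set (V2 := 2 * S / b + T ^ 2). set (Y2 := 2 * S + b * V2).
  assert (HS : 0 <= S) by (apply energy_nonneg; lra).
  assert (HV2 : 0 <= V2).
  { pose proof (pow2_ge_0 T). assert (0 <= 2 * S / b) by (apply Rdiv_nonneg_pos; lra).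
    unfold V2. lra. }
  assert (HY2 : 0 <= Y2) by (unfold Y2; nra).
  assert (HWV : sqrt Y2 * sqrt V2 <= (Y2 + V2) / 2).
  { pose proof (sqrt_sqrt Y2 HY2). pose proof (sqrt_sqrt V2 HV2).
    pose proof (pow2_ge_0 (sqrt Y2 - sqrt V2)). nra. }
  assert (HYV : Y2 + V2 <= 16 * S + (b + 1) * T ^ 2).
  { assert (2 * S / b <= 12 * S).
    { apply Rmult_le_reg_r with b; [lra|].
      replace (2 * S / b * b) with (2 * S) by (field; lra). nra. }
    replace (Y2 + V2) with (4 * S + 2 * S / b + (b + 1) * T ^ 2)
      by (unfold Y2, V2; field; lra).
    lra. }
  pose proof (energy_increment_le_zeros (sqrt Y2) (sqrt V2) r0 Hr0
    ltac:(intros x Hx; destruct (ef_v_y_sq_le_energy T r0 x HT HTp Hx Hr0);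
          split; apply Rabs_le_sqrt; auto)
    zs al r0 ltac:(lra) ltac:(lra) ltac:(intros; apply Hzs; [lra|auto])) as Hinc.
  replace (length zs + 1)%nat with m in Hinc by lia.
  assert (HAm0 : 0 <= A * INR m) by (apply Rmult_le_pos; [lra|apply pos_INR]).
  eapply Rle_trans; [exact Hinc|].
  replace (4 * A * sqrt Y2 * sqrt V2 * INR m) with (4 * (A * INR m) * (sqrt Y2 * sqrt V2))
    by ring.
  apply Rle_trans with (4 * (A * INR m) * ((Y2 + V2) / 2)); [apply Rmult_le_compat_l; lra|].
  apply Rle_trans with (2 * (A * INR m) * (Y2 + V2)); [lra|].
  apply Rmult_le_compat_l; lra.
Qed.

(* [H r0] is bounded by [2 A m (16 H r0 + (b + 1) T^2)] up to the arbitrarily small [H al];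
   for [32 A m <= 1/2] the [H r0] on the right is absorbed. *)
Lemma energy_bound m zs T r0 : 0 < r0 < 1 -> 0 < T -> (p + 1) * b <= Rpower T (p - 1) ->
  1 <= 6 * b -> 32 * A * INR m <= 1 / 2 -> (1 <= m)%nat -> length zs = (m - 1)%nat ->
  (forall r, 0 < r < 1 -> u r = 0 -> In r zs) ->
  H r0 <= (b + 1) * T ^ 2 / 16.
Proof.
  intros Hr0 HT HTp Hb6 HAm Hm Hlen Hzs.
  apply Rle_plus_epsilon. intros eps He.
  destruct (energy_small_near_0 r0 (eps / 2) ltac:(lra) ltac:(lra)) as [al [Hal Hsmall]].
  pose proof (energy_increment_bound m zs T al r0 Hal ltac:(lra) HT HTp Hb6 Hm Hlen Hzs)
    as Hinc.
  pose proof (Rle_abs (H al)) as Habs. pose proof (energy_nonneg r0 Hr0) as HS.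
  pose proof (pow2_ge_0 T) as HT2. assert (HbT : 0 <= (b + 1) * T ^ 2) by nra.
  assert (E1 : 32 * A * INR m * H r0 <= 1 / 2 * H r0) by (apply Rmult_le_compat_r; lra).
  assert (E2 : 32 * A * INR m * ((b + 1) * T ^ 2) <= 1 / 2 * ((b + 1) * T ^ 2))
    by (apply Rmult_le_compat_r; lra).
  lra.
Qed.

Lemma ef_v_y_sq_bounds m zs r : 1 <= ef_n N -> 3 <= (p - 1) * ef_n N < 4 ->
  32 * A * INR m <= 1 / 2 -> (1 <= m)%nat -> length zs = (m - 1)%nat ->
  (forall x, 0 < x < 1 -> u x = 0 -> In x zs) -> 0 < r < 1 ->
  v r ^ 2 <= v_cap (ef_n N) /\ y r ^ 2 <= y_cap (ef_n N).
Proof.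
  intros Hn Hpn HAm Hm Hlen Hzs Hr. set (n := ef_n N) in *.
  destruct (ef_k_range n p Hn Hpn) as [_ Hk].
  assert (Hb : n ^ 2 / 6 <= b <= n ^ 2 / 4) by (apply ef_b_range; exact Hk).
  pose proof (ef_T_ge_1 n Hn) as HT.
  pose proof (ef_T_admissible N p Hn Hpn) as HTp. fold n in HTp.
  pose proof (energy_bound m zs (ef_T n) r Hr ltac:(lra) HTp ltac:(nra) HAm Hm Hlen Hzs) as HE.
  pose proof (energy_nonneg r Hr) as HE0.
  assert (HEcap : H r <= energy_cap n).
  { unfold energy_cap. eapply Rle_trans; [exact HE|].
    pose proof (pow2_ge_0 (ef_T n)). unfold Rdiv. apply Rmult_le_compat_r; [lra|]. nra. }
  assert (HEc : 2 * H r / b <= 12 * energy_cap n / n ^ 2).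
  { apply Rmult_le_reg_r with (b * n ^ 2); [nra|].
    replace (2 * H r / b * (b * n ^ 2)) with (2 * H r * n ^ 2) by (field; nra).
    replace (12 * energy_cap n / n ^ 2 * (b * n ^ 2)) with (12 * energy_cap n * b)
      by (field; nra).
    nra. }
  destruct (ef_v_y_sq_le_energy (ef_T n) r r ltac:(lra) HTp ltac:(lra) ltac:(lra))
    as [Hv Hy].
  assert (Hvc : v r ^ 2 <= v_cap n) by (unfold v_cap; lra).
  split; [auto|].
  eapply Rle_trans; [exact Hy|]. unfold y_cap.
  assert (Hbv : b * (2 * H r / b + ef_T n ^ 2) <= n ^ 2 / 4 * v_cap n).
  { apply Rmult_le_compat; [lra| |lra|unfold v_cap; lra].
    pose proof (pow2_ge_0 (ef_T n)) as HT2.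
    pose proof (Rdiv_nonneg_pos (2 * H r) b ltac:(lra) ltac:(lra)) as Hq. lra. }
  lra.
Qed.

Lemma ef_derivative_bound m zs r : 1 <= ef_n N -> 3 <= (p - 1) * ef_n N < 4 ->
  32 * A * INR m <= 1 / 2 -> (1 <= m)%nat -> length zs = (m - 1)%nat ->
  (forall x, 0 < x < 1 -> u x = 0 -> In x zs) -> 0 < r < 1 ->
  Rabs (u1 r) <= derivative_cap (ef_n N) / Rpower r (ef_k p + 1).
Proof.
  intros Hn Hpn HAm Hm Hlen Hzs Hr.
  destruct (ef_v_y_sq_bounds m zs r Hn Hpn HAm Hm Hlen Hzs Hr) as [Hv Hy].
  destruct (ef_k_range _ p Hn Hpn) as [_ Hk].
  pose proof (Rpower_pos r (ef_k p + 1)) as HP.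
  apply Rmult_le_reg_l with (Rpower r (ef_k p + 1)); [auto|].
  replace (Rpower r (ef_k p + 1) * (derivative_cap (ef_n N) / Rpower r (ef_k p + 1)))
    with (derivative_cap (ef_n N)) by (field; lra).
  rewrite <- (Rabs_right (Rpower r (ef_k p + 1))), <- Rabs_mult by lra.
  replace (Rpower r (ef_k p + 1) * u1 r) with (y r - ef_k p * v r) by (unfold ef_y, ef_v; ring).
  eapply Rle_trans; [apply Rabs_triang|].
  rewrite Rabs_Ropp, Rabs_mult, (Rabs_right (ef_k p)) by lra.
  pose proof (Rabs_le_sqrt _ _ Hv). pose proof (Rabs_le_sqrt _ _ Hy).
  unfold derivative_cap. pose proof (Rabs_pos (v r)).
  assert (ef_k p * Rabs (v r) <= 2 * ef_n N / 3 * sqrt (v_cap (ef_n N)))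
    by (apply Rmult_le_compat; lra).
  lra.
Qed.

End RadialEnergy.

Theorem lemma3p10 :
  forall (N m : nat), (3 <= N)%nat -> (1 <= m)%nat ->
  exists C delta : R, 0 < C /\ 0 < delta /\
    forall p : R, pS N - delta <= p < pS N ->
    forall u : R -> R, is_u_m_p N p m u ->
    forall r : R, 0 < r < 1 ->
    forall du : R, derivable_pt_lim u r du ->
      Rabs du <= C / Rpower r ((p + 1) / (p - 1)).
Proof.
  intros N m HN Hm. pose proof (ef_n_ge_1 N HN) as Hn.
  exists (derivative_cap (ef_n N)), (ef_delta N m).
  split; [apply derivative_cap_pos; auto|]. split.
  { unfold ef_delta. apply Rdiv_lt_0_compat; [lra|].
    apply le_INR in Hm. simpl in Hm. nra. }
  intros p Hp u [[u1 [u2 [Du [Cu1 [Hu10 [Du1 [Hode _]]]]]]] [[zs [Hlen [_ [_ Hzs]]]] _]]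
    r Hr du Hdu.
  destruct (near_pS_range N m p HN Hm Hp) as [Hpn _].
  destruct (ef_k_range _ p Hn Hpn) as [Hp1 Hk].
  destruct (ef_A_small N m p HN Hm Hp) as [HA HAm].
  rewrite (uniqueness_limite u r du (u1 r) Hdu (Du r ltac:(lra))).
  replace ((p + 1) / (p - 1)) with (ef_k p + 1) by (unfold ef_k; field; lra).
  apply (ef_derivative_bound N p u u1 u2) with (m := m) (zs := zs); auto.
  - pose proof (ef_b_range (ef_n N) (ef_k p) Hk). unfold ef_b. nra.
  - intros x Hx. apply Du. lra.
  - eapply derivable_pt_lim_continuity_pt. apply Du. lra.
  - apply Cu1. lra.
  - intros x Hx Hux. apply Hzs; auto.
Qed.
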